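(* Let $(V,v)$ be a pair of upper and lower probabilities on $(\Omega,\mathcal{F})$ and $\theta:\Omega\to\Omega$ a measurable map preserving $V$. (i) $\theta$ is ergodic with respect to $V$ if and only if for every $\theta$-invariant set $B$, $V(B)=0$ or $V(B^c)=0$. (ii) If $\theta$ is ergodic with respect to $V$, then $\theta$ is ergodic with respect to $v$.
   Context: For a nonempty set $\mathcal{P}$ of finitely additive probabilities on $\mathcal{F}$, $V(A)=\sup_{P\in\mathcal{P}}P(A)$, $v(A)=\inf_{P\in\mathcal{P}}P(A)$. $\theta$ preserves a capacity $\mu$ if $\mu(\theta^{-1}A)=\mu(A)$ for all $A\in\mathcal{F}$ (note $\theta$ preserves $V$ iff it preserves $v$). A set $B$ is $\theta$-invariant if $\theta^{-1}B=B$. For a capacity $\mu$ preserved by $\theta$, $\theta$ is ergodic with respect to $\mu$ if for every $\theta$-invariant $B$: $\mu(B)\in\{0,1\}$, and $\mu(B)=0$ or $\mu(B^c)=0$. *)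

From HB Require Import structures.
From mathcomp Require Import all_boot all_order all_algebra.
From mathcomp Require Import all_classical all_reals all_analysis.
Set Implicit Arguments. Unset Strict Implicit. Unset Printing Implicit Defensive.
Import Order.TTheory GRing.Theory Num.Theory.
Local Open Scope classical_set_scope.
Local Open Scope ring_scope.

(* A finitely additive probability on the sigma-algebra of T (values on
   non-measurable sets are irrelevant). *)
Definition fa_prob d (T : measurableType d) (R : realType) (P : set T -> R) : Prop :=
  P setT = 1 /\
  (forall A, measurable A -> 0 <= P A) /\
  (forall A B, measurable A -> measurable B -> A `&` B = set0 ->
     P (A `|` B) = P A + P B).

Definition upper_prob d (T : measurableType d) (R : realType)
  (Ps : set (set T -> R)) (A : set T) : R := sup [set P A | P in Ps].
Definition lower_prob d (T : measurableType d) (R : realType)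
  (Ps : set (set T -> R)) (A : set T) : R := inf [set P A | P in Ps].

Definition preserves d (T : measurableType d) (R : realType)
  (theta : T -> T) (mu : set T -> R) : Prop :=
  forall A, measurable A -> mu (theta @^-1` A) = mu A.

Definition invariant_set (T : Type) (theta : T -> T) (B : set T) : Prop :=
  theta @^-1` B = B.

Definition ergodic d (T : measurableType d) (R : realType)
  (theta : T -> T) (mu : set T -> R) : Prop :=
  preserves theta mu /\
  forall B, measurable B -> invariant_set theta B ->
    (mu B = 0 \/ mu B = 1) /\ (mu B = 0 \/ mu (~` B) = 0).

From HB Require Import structures.
From mathcomp Require Import all_boot all_order all_algebra.
From mathcomp Require Import all_classical all_reals all_analysis.
Import Order.TTheory GRing.Theory Num.Theory.
Local Open Scope classical_set_scope.
Local Open Scope ring_scope.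

(* Everything rests on the conjugacy [v A = 1 - V (~` A)]: it transports
   preservation from [V] to [v], and it shows that [V (~` B) = 0] forces
   [V B = 1] and [v B = 1], so the condition [V B = 0 \/ V (~` B) = 0] already
   contains the dichotomy [V B \in {0, 1}] and passes to [v], which lies
   between [0] and [V]. *)

Set Implicit Arguments.
Unset Strict Implicit.

Section FiniteAdditivity.
Variables (d : measure_display) (T : measurableType d) (R : realType)
  (P : set T -> R).
Hypothesis faP : fa_prob P.

Lemma fa_probC A : measurable A -> P (~` A) = 1 - P A.
Proof.
case: faP => P1 [_ PU] mA.
have := PU A (~` A) mA (measurableC mA).
by rewrite setUCr setICr P1 => /(_ erefl) ->; rewrite addrAC subrr add0r.
Qed.

Lemma fa_prob_ge0 A : measurable A -> 0 <= P A.
Proof. by case: faP => _ [P_ge0 _]; exact: P_ge0. Qed.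

Lemma fa_prob_le1 A : measurable A -> P A <= 1.
Proof.
by move=> mA; rewrite -subr_ge0 -fa_probC //; exact/fa_prob_ge0/measurableC.
Qed.

End FiniteAdditivity.

Section UpperLowerProbabilities.
Variables (d : measure_display) (T : measurableType d) (R : realType)
  (Ps : set (set T -> R)).
Hypothesis Ps_neq0 : Ps !=set0.
Hypothesis Ps_fa : forall P, Ps P -> fa_prob P.

Local Notation V := (upper_prob Ps).
Local Notation v := (lower_prob Ps).

Let values_neq0 A : [set P A | P in Ps] !=set0.
Proof. by case: Ps_neq0 => P PsP; exists (P A), P. Qed.

Lemma le_upper_prob P A : Ps P -> measurable A -> P A <= V A.
Proof.
move=> PsP mA; apply: ub_le_sup; last by exists P.
by exists 1 => _ [Q PsQ <-]; exact: (fa_prob_le1 (Ps_fa PsQ) mA).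
Qed.

Lemma lower_prob_le P A : Ps P -> measurable A -> v A <= P A.
Proof.
move=> PsP mA; apply: ge_inf; last by exists P.
by exists 0 => _ [Q PsQ <-]; exact: (fa_prob_ge0 (Ps_fa PsQ) mA).
Qed.

Lemma upper_prob_le1 A : measurable A -> V A <= 1.
Proof.
move=> mA; apply: ge_sup => // _ [P PsP <-].
exact: (fa_prob_le1 (Ps_fa PsP) mA).
Qed.

Lemma lower_prob_ge0 A : measurable A -> 0 <= v A.
Proof.
move=> mA; apply: lb_le_inf => // _ [P PsP <-].
exact: (fa_prob_ge0 (Ps_fa PsP) mA).
Qed.

Lemma lower_prob_le_upper A : measurable A -> v A <= V A.
Proof.
move=> mA; case: Ps_neq0 => P PsP.
exact: le_trans (lower_prob_le PsP mA) (le_upper_prob PsP mA).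
Qed.

Lemma lower_probE A : measurable A -> v A = 1 - V (~` A).
Proof.
move=> mA; apply/le_anti/andP; split.
- rewrite lerBrDl -lerBrDr; apply: ge_sup => // _ [P PsP <-].
  by rewrite (fa_probC (Ps_fa PsP)) // lerD2l lerN2 lower_prob_le.
- apply: lb_le_inf => // _ [P PsP <-].
  rewrite lerBlDr -lerBlDl -(fa_probC (Ps_fa PsP)) //.
  exact: (le_upper_prob PsP (measurableC mA)).
Qed.

Lemma lower_prob_eq0 A : measurable A -> V A = 0 -> v A = 0.
Proof.
move=> mA VA0; apply/le_anti.
by rewrite lower_prob_ge0 // andbT -VA0 lower_prob_le_upper.
Qed.

Lemma lower_prob_eq1 A : measurable A -> V (~` A) = 0 -> v A = 1.
Proof. by move=> mA VAC0; rewrite lower_probE // VAC0 subr0. Qed.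

Lemma upper_prob_eq1 A : measurable A -> V (~` A) = 0 -> V A = 1.
Proof.
move=> mA VAC0; apply/le_anti; rewrite upper_prob_le1 //=.
by rewrite -(lower_prob_eq1 mA VAC0) lower_prob_le_upper.
Qed.

Variable theta : T -> T.
Hypothesis theta_measurable : measurable_fun setT theta.
Hypothesis theta_preserves : preserves theta V.

Lemma preserves_lower_prob : preserves theta v.
Proof.
move=> A mA; have mthetaA : measurable (theta @^-1` A).
  by rewrite -[_ @^-1` _]setTI; exact: theta_measurable.
by rewrite !lower_probE // preimage_setC theta_preserves //; exact: measurableC.
Qed.

Lemma ergodic_upper_probP : ergodic theta V <->
  (forall B, measurable B -> invariant_set theta B -> V B = 0 \/ V (~` B) = 0).
Proof.
split=> [[_ ergV] B mB iB | dichotomy]; first by case: (ergV B mB iB).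
split=> // B mB iB; case: (dichotomy B mB iB) => VB0; split; auto.
by right; exact: upper_prob_eq1.
Qed.

Lemma ergodic_lower_prob : ergodic theta V -> ergodic theta v.
Proof.
move=> /ergodic_upper_probP ergV; split; first exact: preserves_lower_prob.
move=> B mB iB; case: (ergV B mB iB) => [VB0 | VBC0].
- by split; left; exact: lower_prob_eq0.
- split; right; first exact: lower_prob_eq1.
  exact: lower_prob_eq0 (measurableC mB) VBC0.
Qed.

End UpperLowerProbabilities.

Theorem proposition6 (d : measure_display) (T : measurableType d) (R : realType)
  (Ps : set (set T -> R)) (theta : T -> T) :
  Ps !=set0 ->
  (forall P, Ps P -> fa_prob P) ->
  measurable_fun setT theta ->
  preserves theta (upper_prob Ps) ->
  ((ergodic theta (upper_prob Ps) <->
     (forall B, measurable B -> invariant_set theta B ->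
        upper_prob Ps B = 0 \/ upper_prob Ps (~` B) = 0)) /\
   (ergodic theta (upper_prob Ps) -> ergodic theta (lower_prob Ps))).
Proof.
move=> Ps_neq0 Ps_fa theta_measurable theta_preserves; split.
- exact: (ergodic_upper_probP Ps_neq0 Ps_fa theta_preserves).
- exact: (ergodic_lower_prob Ps_neq0 Ps_fa theta_measurable theta_preserves).
Qed.
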